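(* Assume $4d\Lambda\le1$. There exist positive constants $C_1,C_2$ depending only on $d$ such that for all $(\xi,\eta)\in\mathbf{C}^{d+1}$ with $0<\Re\eta<\Lambda$ and $|\Im\xi|<C_1\sqrt{\Re\eta/\Lambda}$, $$\Lambda\max\big[|e(\xi)|^2,|e(\bar\xi)|^2\big]\le\Big(1+C_2|\Im\xi|^2/[\Re\eta/\Lambda]\Big)\,\big|e^\eta-1+\Lambda e(\bar\xi)^*e(\xi)\big|.$$
   Context: $\Lambda>0$. For $\xi\in\mathbf{C}^d$, $e(\xi)\in\mathbf{C}^d$ is the column vector with entries $e_j(\xi)=e^{-i\mathbf{e}_j\cdot\xi}-1$ ($\mathbf{e}_j$ the $j$-th unit vector, so $\mathbf{e}_j\cdot\xi=\xi_j$); $\bar\xi$ is the complex conjugate of $\xi$, $^*$ denotes conjugate transpose, and $|\cdot|$ is the Euclidean norm on $\mathbf{C}^d$. *)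

From Stdlib Require Import Reals List.
From Coquelicot Require Import Coquelicot.
Open Scope R_scope.

Definition cexp (z : C) : C :=
  (exp (Re z) * cos (Im z), exp (Re z) * sin (Im z)).

Definition Rsum (d : nat) (f : nat -> R) : R :=
  fold_right Rplus 0 (map f (seq 0 d)).
Definition Csum (d : nat) (f : nat -> C) : C :=
  fold_right Cplus (RtoC 0) (map f (seq 0 d)).

(* Vectors in C^d are represented as functions nat -> C, coordinates j < d. *)
Definition evec (xi : nat -> C) (j : nat) : C :=
  Cminus (cexp (Cmult (0, -1) (xi j))) (RtoC 1).

Definition vconj (xi : nat -> C) (j : nat) : C := Cconj (xi j).

Definition cnorm2 (d : nat) (v : nat -> C) : R :=
  Rsum d (fun j => (Cmod (v j)) ^ 2).

Definition cdot (d : nat) (u v : nat -> C) : C :=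
  Csum d (fun j => Cmult (Cconj (u j)) (v j)).

Definition imnorm2 (d : nat) (xi : nat -> C) : R :=
  Rsum d (fun j => (Im (xi j)) ^ 2).

From Stdlib Require Import Reals List Lra Lia Psatz.
From Coquelicot Require Import Coquelicot.
Open Scope R_scope.

(* Write a_j = Re xi_j, b_j = Im xi_j, T = sum_j (1 - cos a_j) and B = |Im xi|^2.
   For |b_j| small, both |e(xi)|^2 and |e(conj xi)|^2 are at most
   2T + 4B + 4 sum_j (1 - cos a_j)|b_j|, while w = e(conj xi)^* e(xi) has
   Re w >= 2T - 4B, Re w <= 4d + 4B and |Im w| <= 4 sum_j |sin a_j||b_j|.
   Since |e^eta| >= 1 + Re eta and 4 d Lam <= 1, |e^eta - 1 + Lam w| is then at least
   Lam (rho + 2T - 12B - 4 sum_j |sin a_j||b_j|) with rho = Re eta / Lam.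
   By Cauchy-Schwarz both cross sums are at most sqrt(2TB), and the smallness
   B <= rho/1024 lets AM-GM absorb them into rho + TB/rho. *)

Lemma Rsum_ext d f g : (forall j, f j = g j) -> Rsum d f = Rsum d g.
Proof. intros H. unfold Rsum. f_equal. apply map_ext. auto. Qed.

Lemma Rsum_le d f g :
  (forall j, (j < d)%nat -> f j <= g j) -> Rsum d f <= Rsum d g.
Proof.
  intros H. unfold Rsum.
  assert (Hin : forall j, In j (seq 0 d) -> f j <= g j).
  { intros j Hj. apply in_seq in Hj. apply H. lia. }
  induction (seq 0 d) as [|a l IH]; simpl in *; [lra|].
  apply Rplus_le_compat; auto.
Qed.

Lemma Rsum_plus d f g : Rsum d (fun j => f j + g j) = Rsum d f + Rsum d g.
Proof.
  unfold Rsum. induction (seq 0 d) as [|a l IH]; simpl; [ring|rewrite IH; ring].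
Qed.

Lemma Rsum_minus d f g : Rsum d (fun j => f j - g j) = Rsum d f - Rsum d g.
Proof.
  unfold Rsum. induction (seq 0 d) as [|a l IH]; simpl; [ring|rewrite IH; ring].
Qed.

Lemma Rsum_scal d k f : Rsum d (fun j => k * f j) = k * Rsum d f.
Proof.
  unfold Rsum. induction (seq 0 d) as [|a l IH]; simpl; [ring|rewrite IH; ring].
Qed.

Lemma Rsum_const d k : Rsum d (fun _ => k) = k * INR d.
Proof.
  unfold Rsum. rewrite <- (length_seq d 0) at 2.
  induction (seq 0 d) as [|a l IH]; simpl length; simpl fold_right;
    [simpl; ring | rewrite IH, S_INR; ring].
Qed.

Lemma Rsum_nonneg d f : (forall j, (j < d)%nat -> 0 <= f j) -> 0 <= Rsum d f.
Proof.
  intros H. rewrite <- (Rmult_0_l (INR d)), <- Rsum_const. apply Rsum_le. exact H.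
Qed.

Lemma fold_Rplus_nonneg (l : list nat) f :
  (forall i, 0 <= f i) -> 0 <= fold_right Rplus 0 (map f l).
Proof. intros Hf. induction l as [|i l IH]; simpl; [lra|]. specialize (Hf i). lra. Qed.

Lemma Rsum_term_le d f j :
  (forall i, 0 <= f i) -> (j < d)%nat -> f j <= Rsum d f.
Proof.
  intros Hf Hj. unfold Rsum.
  assert (Hin : In j (seq 0 d)) by (apply in_seq; lia).
  induction (seq 0 d) as [|a l IH]; simpl in *; [tauto|].
  pose proof (fold_Rplus_nonneg l f Hf).
  destruct Hin as [<-|Hin]; [lra|]. specialize (IH Hin). specialize (Hf a). lra.
Qed.

Lemma cauchy_schwarz_cons X A C u v :
  0 <= A -> 0 <= C -> X ^ 2 <= A * C -> (u * v + X) ^ 2 <= (u ^ 2 + A) * (v ^ 2 + C).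
Proof.
  intros HA HC HX.
  assert (Hcross : (2 * u * v * X) ^ 2 <= (A * v ^ 2 + C * u ^ 2) ^ 2).
  { pose proof (pow2_ge_0 (A * v ^ 2 - C * u ^ 2)). pose proof (pow2_ge_0 (u * v)). nra. }
  assert (0 <= A * v ^ 2 + C * u ^ 2).
  { pose proof (pow2_ge_0 u). pose proof (pow2_ge_0 v). nra. }
  assert (2 * u * v * X <= A * v ^ 2 + C * u ^ 2) by nra.
  nra.
Qed.

Lemma Rsum_cauchy_schwarz d x y :
  Rsum d (fun j => x j * y j) ^ 2 <=
  Rsum d (fun j => x j ^ 2) * Rsum d (fun j => y j ^ 2).
Proof.
  unfold Rsum. induction (seq 0 d) as [|a l IH]; simpl fold_right; [lra|].
  apply cauchy_schwarz_cons; auto; apply fold_Rplus_nonneg; intros; apply pow2_ge_0.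
Qed.

Lemma Cmod_sq z : Cmod z ^ 2 = fst z ^ 2 + snd z ^ 2.
Proof. unfold Cmod. rewrite pow2_sqrt; [reflexivity|nra]. Qed.

Lemma Cmod_le_Rabs_add z : Cmod z <= Rabs (fst z) + Rabs (snd z).
Proof.
  pose proof (Rabs_pos (fst z)). pose proof (Rabs_pos (snd z)).
  rewrite <- (sqrt_pow2 (Rabs (fst z) + Rabs (snd z))) by lra.
  apply sqrt_le_1_alt. rewrite <- (pow2_abs (fst z)), <- (pow2_abs (snd z)). nra.
Qed.

Lemma Cmod_cexp eta : Cmod (cexp eta) = exp (Re eta).
Proof.
  pose proof (exp_pos (Re eta)). pose proof (sin2_cos2 (Im eta)). unfold Rsqr in *.
  unfold Cmod, cexp; cbn [fst snd].
  transitivity (sqrt (exp (Re eta) ^ 2)); [f_equal; nra | apply sqrt_pow2; lra].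
Qed.

Lemma Csum_fst d f : fst (Csum d f) = Rsum d (fun j => fst (f j)).
Proof. unfold Csum, Rsum. induction (seq 0 d) as [|a l IH]; simpl; congruence. Qed.

Lemma Csum_snd d f : snd (Csum d f) = Rsum d (fun j => snd (f j)).
Proof. unfold Csum, Rsum. induction (seq 0 d) as [|a l IH]; simpl; congruence. Qed.

Lemma evec_coord xi j :
  evec xi j = (exp (Im (xi j)) * cos (Re (xi j)) - 1, - (exp (Im (xi j)) * sin (Re (xi j)))).
Proof.
  unfold evec, cexp. destruct (xi j) as [a b]. unfold Cminus, Cmult, Cplus, Copp, RtoC, Re, Im.
  cbn [fst snd]. replace (0 * a - -1 * b) with b by ring.
  replace (0 * b + -1 * a) with (- a) by ring.
  rewrite cos_neg, sin_neg. f_equal; ring.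
Qed.

Lemma Cmod_evec_sq xi j :
  Cmod (evec xi j) ^ 2 =
  exp (Im (xi j)) ^ 2 - 2 * exp (Im (xi j)) * cos (Re (xi j)) + 1.
Proof.
  rewrite Cmod_sq, evec_coord; cbn [fst snd].
  pose proof (sin2_cos2 (Re (xi j))). unfold Rsqr in *. nra.
Qed.

Lemma exp_mul_exp_opp b : exp b * exp (- b) = 1.
Proof. rewrite exp_Ropp. apply Rinv_r. apply Rgt_not_eq, exp_pos. Qed.

Lemma conj_evec_vconj_mul_evec xi j :
  Cmult (Cconj (evec (vconj xi) j)) (evec xi j) =
  (2 - cos (Re (xi j)) * (exp (Im (xi j)) + exp (- Im (xi j))),
   sin (Re (xi j)) * (exp (Im (xi j)) - exp (- Im (xi j)))).
Proof.
  rewrite !evec_coord. unfold vconj, Cconj, Cmult, Re, Im. destruct (xi j) as [a b].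
  cbn [fst snd]. pose proof (sin2_cos2 a). pose proof (exp_mul_exp_opp b).
  unfold Rsqr in *. f_equal; nra.
Qed.

Lemma exp_sub1_le y : Rabs y <= 1/2 -> Rabs (exp y - 1) <= 2 * Rabs y.
Proof.
  intros Hy. pose proof (exp_ineq1_le y). pose proof (exp_ineq1_le (- y)).
  pose proof (exp_mul_exp_opp y). pose proof (exp_pos y).
  destruct (Rle_or_lt 0 y).
  - rewrite (Rabs_pos_eq y) in Hy |- * by lra. rewrite Rabs_pos_eq by lra.
    assert (exp y * (1 - y) <= 1) by nra. nra.
  - assert (exp y <= 1) by (rewrite <- exp_0; apply Rlt_le, exp_increasing; lra).
    rewrite (Rabs_left y) in Hy |- * by lra. rewrite Rabs_left1 by lra. lra.
Qed.

Lemma cosh_sub2_bounds b :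
  Rabs b <= 1/2 -> 0 <= exp b + exp (- b) - 2 <= 4 * b ^ 2.
Proof.
  intros Hb. pose proof (exp_sub1_le b Hb) as HE.
  assert (HF : Rabs (exp (- b) - 1) <= 2 * Rabs b).
  { rewrite <- (Rabs_Ropp b). apply exp_sub1_le. rewrite Rabs_Ropp. exact Hb. }
  pose proof (exp_mul_exp_opp b). pose proof (exp_pos (- b)).
  (* e^b + e^-b - 2 = e^-b (e^b - 1)^2 = (e^b - 1)(1 - e^-b) *)
  split.
  - pose proof (pow2_ge_0 (exp b - 1)). nra.
  - replace (exp b + exp (- b) - 2) with ((exp b - 1) * - (exp (- b) - 1)) by nra.
    rewrite <- pow2_abs. eapply Rle_trans; [apply Rle_abs|].
    rewrite Rabs_mult, Rabs_Ropp. pose proof (Rabs_pos (exp b - 1)).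
    pose proof (Rabs_pos (exp (- b) - 1)). nra.
Qed.

Lemma sinh_le b : Rabs b <= 1/2 -> Rabs (exp b - exp (- b)) <= 4 * Rabs b.
Proof.
  intros Hb. pose proof (exp_sub1_le b Hb).
  assert (Rabs (exp (- b) - 1) <= 2 * Rabs b).
  { rewrite <- (Rabs_Ropp b). apply exp_sub1_le. rewrite Rabs_Ropp. exact Hb. }
  replace (exp b - exp (- b)) with ((exp b - 1) + - (exp (- b) - 1)) by ring.
  eapply Rle_trans; [apply Rabs_triang|]. rewrite Rabs_Ropp. lra.
Qed.

Lemma evec_sq_le a b :
  Rabs b <= 1/2 ->
  exp b ^ 2 - 2 * exp b * cos a + 1 <= 2 * (1 - cos a) + 4 * b ^ 2 + 4 * ((1 - cos a) * Rabs b).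
Proof.
  intros Hb. pose proof (exp_sub1_le b Hb). pose proof (COS_bound a).
  assert ((exp b - 1) ^ 2 <= 4 * b ^ 2).
  { rewrite <- pow2_abs, <- (pow2_abs b). pose proof (Rabs_pos (exp b - 1)). nra. }
  assert (exp b <= 1 + 2 * Rabs b) by (pose proof (Rle_abs (exp b - 1)); lra).
  nra.
Qed.

Lemma Rsum_Rabs_le d f : Rabs (Rsum d f) <= Rsum d (fun j => Rabs (f j)).
Proof.
  unfold Rsum. induction (seq 0 d) as [|a l IH]; simpl; [rewrite Rabs_R0; lra|].
  eapply Rle_trans; [apply Rabs_triang|]. lra.
Qed.

Definition versin_sum (d : nat) (xi : nat -> C) : R :=
  Rsum d (fun j => 1 - cos (Re (xi j))).
Definition versin_Im_sum (d : nat) (xi : nat -> C) : R :=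
  Rsum d (fun j => (1 - cos (Re (xi j))) * Rabs (Im (xi j))).
Definition sin_Im_sum (d : nat) (xi : nat -> C) : R :=
  Rsum d (fun j => Rabs (sin (Re (xi j))) * Rabs (Im (xi j))).

Lemma versin_sum_nonneg d xi : 0 <= versin_sum d xi.
Proof. apply Rsum_nonneg. intros j _. pose proof (COS_bound (Re (xi j))). lra. Qed.

Lemma imnorm2_nonneg d xi : 0 <= imnorm2 d xi.
Proof. apply Rsum_nonneg. intros j _. apply pow2_ge_0. Qed.

Lemma sin_Im_sum_nonneg d xi : 0 <= sin_Im_sum d xi.
Proof. apply Rsum_nonneg. intros j _. apply Rmult_le_pos; apply Rabs_pos. Qed.

Lemma Im_sq_le_imnorm2 d xi j : (j < d)%nat -> Im (xi j) ^ 2 <= imnorm2 d xi.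
Proof. apply (Rsum_term_le d (fun j => Im (xi j) ^ 2)). intros; apply pow2_ge_0. Qed.

Lemma Rsum_mul_Rabs_Im_sq_le d xi x :
  (forall j, x j ^ 2 <= 2 * (1 - cos (Re (xi j)))) ->
  Rsum d (fun j => x j * Rabs (Im (xi j))) ^ 2 <= 2 * versin_sum d xi * imnorm2 d xi.
Proof.
  intros Hx. eapply Rle_trans; [apply Rsum_cauchy_schwarz|]; cbv beta.
  replace (Rsum d (fun j => Rabs (Im (xi j)) ^ 2)) with (imnorm2 d xi)
    by (apply Rsum_ext; intros; rewrite pow2_abs; reflexivity).
  unfold versin_sum. rewrite <- (Rsum_scal d 2).
  apply Rmult_le_compat_r; [apply imnorm2_nonneg | apply Rsum_le; auto].
Qed.

Lemma versin_Im_sum_sq_le d xi :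
  versin_Im_sum d xi ^ 2 <= 2 * versin_sum d xi * imnorm2 d xi.
Proof.
  apply Rsum_mul_Rabs_Im_sq_le. intros j. pose proof (COS_bound (Re (xi j))). nra.
Qed.

Lemma sin_Im_sum_sq_le d xi :
  sin_Im_sum d xi ^ 2 <= 2 * versin_sum d xi * imnorm2 d xi.
Proof.
  apply Rsum_mul_Rabs_Im_sq_le. intros j. rewrite pow2_abs.
  pose proof (COS_bound (Re (xi j))). pose proof (sin2_cos2 (Re (xi j))). unfold Rsqr in *. nra.
Qed.

Lemma Re_cdot_evec d xi :
  Re (cdot d (evec (vconj xi)) (evec xi)) =
  Rsum d (fun j => 2 - cos (Re (xi j)) * (exp (Im (xi j)) + exp (- Im (xi j)))).
Proof.
  unfold cdot, Re at 1. rewrite Csum_fst. apply Rsum_ext. intros j.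
  rewrite conj_evec_vconj_mul_evec. reflexivity.
Qed.

Lemma Im_cdot_evec d xi :
  Im (cdot d (evec (vconj xi)) (evec xi)) =
  Rsum d (fun j => sin (Re (xi j)) * (exp (Im (xi j)) - exp (- Im (xi j)))).
Proof.
  unfold cdot, Im at 1. rewrite Csum_snd. apply Rsum_ext. intros j.
  rewrite conj_evec_vconj_mul_evec. reflexivity.
Qed.

Section SmallImaginaryPart.

Variables (d : nat) (xi : nat -> C).
Hypothesis Im_small : forall j, (j < d)%nat -> Rabs (Im (xi j)) <= 1/2.

Lemma Rmax_cnorm2_evec_le :
  Rmax (cnorm2 d (evec xi)) (cnorm2 d (evec (vconj xi))) <=
  2 * versin_sum d xi + 4 * imnorm2 d xi + 4 * versin_Im_sum d xi.
Proof.
  unfold versin_sum, imnorm2, versin_Im_sum. rewrite <- !Rsum_scal, <- !Rsum_plus.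
  apply Rmax_lub; apply Rsum_le; intros j Hj; rewrite Cmod_evec_sq.
  - apply evec_sq_le. auto.
  - unfold vconj. rewrite re_conj, im_conj, <- (Rabs_Ropp (Im (xi j))).
    replace (Im (xi j) ^ 2) with ((- Im (xi j)) ^ 2) by ring.
    apply evec_sq_le. rewrite Rabs_Ropp. auto.
Qed.

Lemma Re_cdot_evec_ge :
  2 * versin_sum d xi - 4 * imnorm2 d xi <= Re (cdot d (evec (vconj xi)) (evec xi)).
Proof.
  rewrite Re_cdot_evec. unfold versin_sum, imnorm2.
  rewrite <- !Rsum_scal, <- Rsum_minus.
  apply Rsum_le. intros j Hj.
  pose proof (cosh_sub2_bounds _ (Im_small j Hj)). pose proof (COS_bound (Re (xi j))). nra.
Qed.

Lemma Re_cdot_evec_le :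
  Re (cdot d (evec (vconj xi)) (evec xi)) <= 4 * INR d + 4 * imnorm2 d xi.
Proof.
  rewrite Re_cdot_evec. unfold imnorm2.
  rewrite <- Rsum_const, <- !Rsum_scal, <- Rsum_plus.
  apply Rsum_le. intros j Hj.
  pose proof (cosh_sub2_bounds _ (Im_small j Hj)). pose proof (COS_bound (Re (xi j))).
  pose proof (exp_pos (Im (xi j))). pose proof (exp_pos (- Im (xi j))). nra.
Qed.

Lemma Im_cdot_evec_le :
  Rabs (Im (cdot d (evec (vconj xi)) (evec xi))) <= 4 * sin_Im_sum d xi.
Proof.
  rewrite Im_cdot_evec. eapply Rle_trans; [apply Rsum_Rabs_le|].
  unfold sin_Im_sum. rewrite <- Rsum_scal. apply Rsum_le. intros j Hj.
  rewrite Rabs_mult. pose proof (sinh_le _ (Im_small j Hj)).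
  pose proof (Rabs_pos (sin (Re (xi j)))). nra.
Qed.

End SmallImaginaryPart.

Lemma Cmod_sub1_add_scal_ge (z w : C) (Lam : R) :
  0 <= Lam ->
  Cmod z - Rabs (1 - Lam * Re w) - Lam * Rabs (Im w) <=
  Cmod (Cplus (Cminus z (RtoC 1)) (Cmult (RtoC Lam) w)).
Proof.
  intros HLam.
  set (r := Cminus (RtoC 1) (Cmult (RtoC Lam) w)).
  assert (Hz : z = Cplus (Cplus (Cminus z (RtoC 1)) (Cmult (RtoC Lam) w)) r).
  { unfold r. destruct z, w. unfold Cplus, Cminus, Cmult, Copp, RtoC. simpl. f_equal; ring. }
  assert (Hr : Cmod r <= Rabs (1 - Lam * Re w) + Lam * Rabs (Im w)).
  { eapply Rle_trans; [apply Cmod_le_Rabs_add|]. unfold r. destruct w.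
    unfold Cplus, Cminus, Cmult, Copp, RtoC, Re, Im. simpl.
    replace (1 + - (Lam * r0 - 0 * r1)) with (1 - Lam * r0) by ring.
    replace (0 + - (Lam * r1 + 0 * r0)) with (- (Lam * r1)) by ring.
    rewrite Rabs_Ropp, Rabs_mult, (Rabs_pos_eq Lam) by lra. lra. }
  pose proof (Cmod_triangle (Cplus (Cminus z (RtoC 1)) (Cmult (RtoC Lam) w)) r).
  rewrite <- Hz in H. lra.
Qed.

Lemma Cmod_symbol_ge d xi Lam eta :
  0 < Lam -> 4 * INR d * Lam <= 1 ->
  (forall j, (j < d)%nat -> Rabs (Im (xi j)) <= 1/2) ->
  Lam * (Re eta / Lam + 2 * versin_sum d xi - 12 * imnorm2 d xi - 4 * sin_Im_sum d xi) <=
  Cmod (Cplus (Cminus (cexp eta) (RtoC 1))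
              (Cmult (RtoC Lam) (cdot d (evec (vconj xi)) (evec xi)))).
Proof.
  intros HLam HdLam Hsmall.
  eapply Rle_trans; [|apply Cmod_sub1_add_scal_ge; lra].
  rewrite Cmod_cexp. pose proof (exp_ineq1_le (Re eta)).
  pose proof (Re_cdot_evec_ge d xi Hsmall). pose proof (Re_cdot_evec_le d xi Hsmall).
  pose proof (Im_cdot_evec_le d xi Hsmall). pose proof (imnorm2_nonneg d xi).
  set (w := cdot d (evec (vconj xi)) (evec xi)) in *.
  assert (Rabs (1 - Lam * Re w) <= 1 - Lam * Re w + 8 * Lam * imnorm2 d xi).
  { apply Rabs_le. split; nra. }
  replace (Lam * (Re eta / Lam + 2 * versin_sum d xi - 12 * imnorm2 d xi - 4 * sin_Im_sum d xi))
    with (Re eta + Lam * (2 * versin_sum d xi - 12 * imnorm2 d xi - 4 * sin_Im_sum d xi))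
    by (field; lra).
  nra.
Qed.

Lemma symbol_ratio_le (rho T B Y1 Y2 : R) :
  0 < rho -> 0 <= B -> 1024 * B <= rho -> 0 <= T -> 0 <= Y2 ->
  Y1 ^ 2 <= 2 * T * B -> Y2 ^ 2 <= 2 * T * B ->
  2 * T + 4 * B + 4 * Y1 <= (1 + 100 * B / rho) * (rho + 2 * T - 12 * B - 4 * Y2).
Proof.
  intros Hrho HB HBrho HT HY2 HY1sq HY2sq.
  apply (Rmult_le_reg_l rho); [exact Hrho|].
  replace (rho * ((1 + 100 * B / rho) * (rho + 2 * T - 12 * B - 4 * Y2)))
    with ((rho + 100 * B) * (rho + 2 * T - 12 * B - 4 * Y2)) by (field; lra).
  assert (HZ : (4 * Y1 + 5 * Y2) ^ 2 <= 164 * (T * B))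
    by (pose proof (pow2_ge_0 (4 * Y1 - 5 * Y2)); nra).
  assert (rho * (4 * Y1 + 5 * Y2) <= rho ^ 2 / 2 + 82 * (T * B))
    by (pose proof (pow2_ge_0 (rho - (4 * Y1 + 5 * Y2))); nra).
  assert (400 * B * Y2 <= rho * Y2) by nra.
  assert (1200 * B * B <= 2 * rho * B) by nra.
  assert (0 <= rho * B) by nra.
  assert (0 <= T * B) by nra.
  nra.
Qed.

Lemma lt_of_sqrt_lt_scal_sqrt x y c :
  0 <= y -> 0 <= c -> sqrt x < c * sqrt y -> x < c ^ 2 * y.
Proof.
  intros Hy Hc H. apply sqrt_lt_0_alt.
  rewrite sqrt_mult, sqrt_pow2; auto. apply pow2_ge_0.
Qed.

Theorem lemma5p1 (d : nat) (hd : (1 <= d)%nat) :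
  exists C1 C2 : R, 0 < C1 /\ 0 < C2 /\
  forall (Lam : R), 0 < Lam -> 4 * INR d * Lam <= 1 ->
  forall (xi : nat -> C) (eta : C),
    0 < Re eta -> Re eta < Lam ->
    sqrt (imnorm2 d xi) < C1 * sqrt (Re eta / Lam) ->
    Lam * Rmax (cnorm2 d (evec xi)) (cnorm2 d (evec (vconj xi)))
    <= (1 + C2 * imnorm2 d xi / (Re eta / Lam)) *
       Cmod (Cplus (Cminus (cexp eta) (RtoC 1))
                   (Cmult (RtoC Lam) (cdot d (evec (vconj xi)) (evec xi)))).
Proof.
  exists (1/32), 100. split; [lra|]. split; [lra|].
  intros Lam HLam HdLam xi eta Hre HreLam Hsqrt.
  assert (Hrho : 0 < Re eta / Lam < 1).
  { split; [apply Rdiv_lt_0_compat; lra | apply Rlt_div_l; lra]. }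
  pose proof (imnorm2_nonneg d xi) as HB.
  assert (HBrho : 1024 * imnorm2 d xi <= Re eta / Lam).
  { apply lt_of_sqrt_lt_scal_sqrt in Hsqrt; lra. }
  assert (Hsmall : forall j, (j < d)%nat -> Rabs (Im (xi j)) <= 1/2).
  { intros j Hj. pose proof (Im_sq_le_imnorm2 d xi j Hj).
    rewrite <- pow2_abs in H. pose proof (Rabs_pos (Im (xi j))). nra. }
  apply Rle_trans with (Lam * (2 * versin_sum d xi + 4 * imnorm2 d xi + 4 * versin_Im_sum d xi)).
  { apply Rmult_le_compat_l; [lra | apply Rmax_cnorm2_evec_le; exact Hsmall]. }
  apply Rle_trans with ((1 + 100 * imnorm2 d xi / (Re eta / Lam)) *
    (Lam * (Re eta / Lam + 2 * versin_sum d xi - 12 * imnorm2 d xi - 4 * sin_Im_sum d xi))).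
  - rewrite <- Rmult_assoc, (Rmult_comm _ Lam), Rmult_assoc. apply Rmult_le_compat_l; [lra|].
    apply symbol_ratio_le; auto using versin_sum_nonneg, sin_Im_sum_nonneg,
      versin_Im_sum_sq_le, sin_Im_sum_sq_le; lra.
  - apply Rmult_le_compat_l; [|apply Cmod_symbol_ge; auto].
    pose proof (Rdiv_le_0_compat (100 * imnorm2 d xi) (Re eta / Lam)). lra.
Qed.
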